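(* Let $Y$ be a Banach lattice. Suppose that $F_1,F_2\colon Y\to\mathbb R\cup\{+\infty\}$ satisfy $F_1\ll_{\mathrm Q}F_2$ and that $H\colon Y\to\mathbb R\cup\{+\infty\}$ is totally substitutable. Then $F_1+H\ll_{\mathrm Q}F_2+H$.
   Context: In a Banach lattice, $\wedge,\vee$ are the lattice inf/sup, $\mu^+=\mu\vee0$ and $[a,b]=\{m:a\leq m\leq b\}$. For functions, $G_2\ll_{\mathrm Q}G_1$ means: for all $\mu_1,\mu_2\in Y$ and every $t_{21}\in[0,(\mu_2-\mu_1)^+]$ there exists $t_{12}\in[0,(\mu_1-\mu_2)^+]$ with $G_1(\mu_1+t_{21}-t_{12})+G_2(\mu_2-t_{21}+t_{12})\leq G_1(\mu_1)+G_2(\mu_2)$. $H$ is totally substitutable if for all $\mu_1,\mu_2\in Y$ and all $\mu_1',\mu_2'\in[\mu_1\wedge\mu_2,\mu_1\vee\mu_2]$ with $\mu_1'+\mu_2'=\mu_1+\mu_2$, $H(\mu_1')+H(\mu_2')\leq H(\mu_1)+H(\mu_2)$. *)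

From HB Require Import structures.
From mathcomp Require Import all_boot all_order all_algebra.
From mathcomp Require Import all_classical all_reals all_analysis.
Set Implicit Arguments. Unset Strict Implicit. Unset Printing Implicit Defensive.
Import Order.TTheory GRing.Theory Num.Theory.
Import numFieldNormedType.Exports.
Local Open Scope ring_scope.

(* A (real) Banach lattice: a complete normed space Y over the reals R,
   with a partial order leY compatible with the vector structure, such that
   meetY / joinY are the lattice inf / sup for leY, and the norm is a
   lattice norm: |x| <= |y| implies ||x|| <= ||y||, with |x| = x v (-x). *)
Definition banach_lattice (R : realType) (Y : completeNormedModType R)
    (leY : Y -> Y -> Prop) (meetY joinY : Y -> Y -> Y) : Prop :=
  (forall x, leY x x) /\
  (forall x y, leY x y -> leY y x -> x = y) /\
  (forall x y z, leY x y -> leY y z -> leY x z) /\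
  (forall x y z, leY x y -> leY (x + z) (y + z)) /\
  (forall (a : R) x y, 0 <= a -> leY x y -> leY (a *: x) (a *: y)) /\
      (forall x y, [/\ leY (meetY x y) x, leY (meetY x y) y &
                      forall z, leY z x -> leY z y -> leY z (meetY x y)]) /\
      (forall x y, [/\ leY x (joinY x y), leY y (joinY x y) &
                      forall z, leY x z -> leY y z -> leY (joinY x y) z]) /\
  (forall x y, leY (joinY x (- x)) (joinY y (- y)) -> `|x| <= `|y|).

Definition posp (Y : zmodType) (joinY : Y -> Y -> Y) (mu : Y) : Y := joinY mu 0.

Definition no_minfty (R : realType) (Y : Type) (F : Y -> \bar R) : Prop :=
  forall y, F y <> -oo%E.

(* G2 <<_Q G1 *)
Definition qll (R : realType) (Y : zmodType) (leY : Y -> Y -> Prop)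
    (joinY : Y -> Y -> Y) (G2 G1 : Y -> \bar R) : Prop :=
  forall mu1 mu2 t21 : Y,
    leY 0 t21 -> leY t21 (posp joinY (mu2 - mu1)) ->
    exists t12 : Y,
      [/\ leY 0 t12, leY t12 (posp joinY (mu1 - mu2)) &
          (G1 (mu1 + t21 - t12)%R + G2 (mu2 - t21 + t12)%R <= G1 mu1 + G2 mu2)%E].

Definition totally_substitutable (R : realType) (Y : zmodType)
    (leY : Y -> Y -> Prop) (meetY joinY : Y -> Y -> Y) (H : Y -> \bar R) : Prop :=
  forall mu1 mu2 mu1' mu2' : Y,
    leY (meetY mu1 mu2) mu1' -> leY mu1' (joinY mu1 mu2) ->
    leY (meetY mu1 mu2) mu2' -> leY mu2' (joinY mu1 mu2) ->
    mu1' + mu2' = mu1 + mu2 ->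
    (H mu1' + H mu2' <= H mu1 + H mu2)%E.

(* Given t21, let t12 be the answer supplied by F1 <<_Q F2.  Since
   (mu2 - mu1)^+ lies below both (mu1 v mu2) - mu1 and mu2 - (mu1 ^ mu2), and
   symmetrically for (mu1 - mu2)^+, the exchanged points mu1 + t21 - t12 and
   mu2 - t21 + t12 stay in [mu1 ^ mu2, mu1 v mu2] and have the same sum, so
   total substitutability of H gives the matching inequality for H; adding the
   two inequalities proves the claim with the same t12. *)
From HB Require Import structures.
From mathcomp Require Import all_boot all_order all_algebra.
From mathcomp Require Import all_classical all_reals all_analysis.
Import Order.TTheory GRing.Theory Num.Theory.
Set Implicit Arguments. Unset Strict Implicit. Unset Printing Implicit Defensive.
Local Open Scope ring_scope.

Section TranslationInvariantOrder.
Variables (Y : zmodType) (leY : Y -> Y -> Prop).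
Hypothesis leY_trans : forall x y z, leY x y -> leY y z -> leY x z.
Hypothesis leY_add2r : forall x y z, leY x y -> leY (x + z) (y + z).

Lemma leY_add2l z x y : leY x y -> leY (z + x) (z + y).
Proof. by rewrite ![z + _]addrC; apply: leY_add2r. Qed.

Lemma leY_subr_ge0 x y : leY 0 (y - x) <-> leY x y.
Proof.
split=> [/(leY_add2r x)|/(leY_add2r (- x))]; last by rewrite subrr.
by rewrite add0r subrK.
Qed.

Lemma leY_oppr x y : leY x y -> leY (- y) (- x).
Proof.
by move=> /(leY_add2r (- x - y)); rewrite addrA subrr add0r addrCA subrr addr0.
Qed.

Lemma leY_sub x y z w : leY x y -> leY w z -> leY (x - z) (y - w).
Proof.
move=> lexy /leY_oppr lezw.
by apply: leY_trans (leY_add2r _ lexy) _; apply: leY_add2l.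
Qed.

Lemma exchange_le_upper m J t s :
  leY t (J - m) -> leY 0 s -> leY (m + t - s) J.
Proof.
move=> /(leY_add2l m) letJ les; have := leY_sub letJ les.
by rewrite subr0 [m + (J - m)]addrC subrK.
Qed.

Lemma exchange_ge_lower M m t s :
  leY 0 t -> leY s (m - M) -> leY M (m + t - s).
Proof.
move=> /(leY_add2l m) ge0t les; have := leY_sub ge0t les.
by rewrite addr0 opprB [m + (M - m)]addrC subrK.
Qed.

Section Lattice.
Variables meetY joinY : Y -> Y -> Y.
Hypothesis meetY_glb : forall x y, [/\ leY (meetY x y) x, leY (meetY x y) y &
  forall z, leY z x -> leY z y -> leY z (meetY x y)].
Hypothesis joinY_lub : forall x y, [/\ leY x (joinY x y), leY y (joinY x y) &
  forall z, leY x z -> leY y z -> leY (joinY x y) z].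

Lemma posp_le x w : leY x w -> leY 0 w -> leY (posp joinY x) w.
Proof. by case: (joinY_lub x 0) => _ _; apply. Qed.

Lemma posp_subr_le_subl m a b :
  leY m a -> leY m b -> leY (posp joinY (b - a)) (b - m).
Proof.
move=> lema lemb.
by apply: posp_le; [apply/leY_add2l/leY_oppr | apply/leY_subr_ge0].
Qed.

Lemma posp_subr_le_subr j a b :
  leY a j -> leY b j -> leY (posp joinY (b - a)) (j - a).
Proof.
move=> leaj lebj.
by apply: posp_le; [apply: leY_add2r | apply/leY_subr_ge0].
Qed.

Lemma totally_substitutable_exchange (R : realType) (H : Y -> \bar R)
    mu1 mu2 t21 t12 :
  totally_substitutable leY meetY joinY H ->
  leY 0 t21 -> leY t21 (posp joinY (mu2 - mu1)) ->
  leY 0 t12 -> leY t12 (posp joinY (mu1 - mu2)) ->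
  (H (mu1 + t21 - t12)%R + H (mu2 - t21 + t12)%R <= H mu1 + H mu2)%E.
Proof.
move=> hH ge0t21 let21 ge0t12 let12.
have [leM1 leM2 _] := meetY_glb mu1 mu2.
have [le1J le2J _] := joinY_lub mu1 mu2.
rewrite [mu2 - t21 + t12]addrAC; apply: hH.
- apply: exchange_ge_lower => //; apply: leY_trans let12 _.
  exact: posp_subr_le_subl.
- apply: exchange_le_upper => //; apply: leY_trans let21 _.
  exact: posp_subr_le_subr.
- apply: exchange_ge_lower => //; apply: leY_trans let21 _.
  exact: posp_subr_le_subl.
- apply: exchange_le_upper => //; apply: leY_trans let12 _.
  exact: posp_subr_le_subr.
- by rewrite -[mu2 + t12 - t21]addrAC addrACA addNr addr0 addrACA subrr addr0.
Qed.

End Lattice.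
End TranslationInvariantOrder.

Theorem proposition2p41 (R : realType) (Y : completeNormedModType R)
    (leY : Y -> Y -> Prop) (meetY joinY : Y -> Y -> Y)
    (F1 F2 H : Y -> \bar R) :
  banach_lattice leY meetY joinY ->
  no_minfty F1 -> no_minfty F2 -> no_minfty H ->
  qll leY joinY F1 F2 ->
  totally_substitutable leY meetY joinY H ->
  qll leY joinY (fun y => (F1 y + H y)%E) (fun y => (F2 y + H y)%E).
Proof.
(* [leeD] and [addeACA] hold on all of \bar R. *)
move=> [_ [_ [leY_trans [leY_add2r [_ [meetY_glb [joinY_lub _]]]]]]] _ _ _.
move=> hF hH mu1 mu2 t21 ge0t21 let21.
have [t12 [ge0t12 let12 hF12]] := hF mu1 mu2 t21 ge0t21 let21.
exists t12; split => //.
have hH12 := totally_substitutable_exchange leY_trans leY_add2r meetY_glb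
  joinY_lub hH ge0t21 let21 ge0t12 let12.
by rewrite addeACA [X in (_ <= X)%E]addeACA; apply: leeD.
Qed.
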